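(* For every graph $G$, $f^-(G+K_1)=f^-(G)$ and $f^+(G+K_1)=f^+(G)$.
   Context: All graphs are finite, simple, undirected and connected. $N[v]=N(v)\cup\{v\}$ is the closed neighbourhood. A chromatic colouring of $G$ is a proper vertex colouring $c:V(G)\to\{c_1,\dots,c_{\chi(G)}\}$. With respect to $c$, a vertex $v$ yields a rainbow neighbourhood if $N[v]$ contains a vertex of each colour $c_1,\dots,c_{\chi(G)}$; $r_\chi(G)$ is the number of such vertices, and $r^-_\chi(G)$, $r^+_\chi(G)$ are its minimum and maximum over all chromatic colourings of $G$. Fading: for a set $F\subseteq V(G)$ (a fade set), the vertices of $F$ receive a transparent colour $c^\circ$ not among $c_1,\dots,c_{\chi(G)}$; after fading, $v$ yields a rainbow neighbourhood iff for every $i$ some vertex of $N[v]\setminus F$ has colour $c_i$. The fading number $f^-(G)$ is the maximum $|F|$ over chromatic colourings $c$ attaining $r_\chi=r^-_\chi(G)$ and fade sets $F$ such that, after fading $F$, the number of vertices yielding rainbow neighbourhoods is still $r^-_\chi(G)$; $f^+(G)$ is defined analogously with $r^+_\chi(G)$. The join $G_1+G_2$ of vertex-disjoint graphs is $G_1\cup G_2$ together with all edges joining a vertex of $G_1$ to a vertex of $G_2$. *)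

From mathcomp Require Import all_boot.
Set Implicit Arguments. Unset Strict Implicit. Unset Printing Implicit Defensive.

Section Graphs.
Variable T : finType.
Variable e : rel T.

Definition simple_graph : Prop := symmetric e /\ irreflexive e.
Definition connected_graph : Prop := forall x y : T, connect e x y.

Definition closed_nbhd (v : T) : {set T} := [set u | (u == v) || e v u].

Definition proper (k : nat) (c : {ffun T -> 'I_k}) : bool :=
  [forall x, forall y, e x y ==> (c x != c y)].

(* chromatic number: least k admitting a proper k-colouring
   (#|T| colours always suffice for an irreflexive relation) *)
Definition chi : nat :=
  \big[minn/#|T|]_(k < #|T|.+1 | [exists c : {ffun T -> 'I_k}, proper c]) (k : nat).

Definition chromatic (c : {ffun T -> 'I_chi}) : bool := proper c.

Definition rainbow (c : {ffun T -> 'I_chi}) (F : {set T}) (v : T) : bool :=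
  [forall i : 'I_chi, exists u, [&& u \in closed_nbhd v, u \notin F & c u == i]].

Definition rcount (c : {ffun T -> 'I_chi}) (F : {set T}) : nat :=
  #|[set v | rainbow c F v]|.

Definition r_minus : nat :=
  \big[minn/#|T|]_(c | chromatic c) rcount c set0.
Definition r_plus : nat :=
  \max_(c | chromatic c) rcount c set0.

Definition f_minus : nat :=
  \max_(c | chromatic c && (rcount c set0 == r_minus))
     \max_(F : {set T} | rcount c F == r_minus) #|F|.
Definition f_plus : nat :=
  \max_(c | chromatic c && (rcount c set0 == r_plus))
     \max_(F : {set T} | rcount c F == r_plus) #|F|.
End Graphs.

(* the join G + K_1: new vertex None adjacent to every vertex of G *)
Definition join_K1 (T : finType) (e : rel T) : rel (option T) :=
  fun x y => match x, y with
             | Some a, Some b => e a b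
             | None, Some _ | Some _, None => true
             | None, None => false
             end.

From Pilot Require Import Defs.
From mathcomp Require Import all_boot zify.
Import Defs. (* so that [proper] is the colouring predicate, not fintype's *)
Set Implicit Arguments. Unset Strict Implicit. Unset Printing Implicit Defensive.

(* A chromatic colouring of G + K_1 is a chromatic colouring of G, relabelled
   by [lift a], together with the apex colour a; so chi(G + K_1) = chi(G) + 1.
   The apex is rainbow whenever some vertex of G is, and every chromatic
   colouring of G has a rainbow vertex (otherwise recolouring each vertex of
   the last colour by a colour missing from its neighbourhood saves a colour).
   Hence, as long as the apex is not faded, fading F in G + K_1 leaves exactly
   one more rainbow vertex than fading its trace on G, while fading the apex
   leaves none: r^-, r^+ both increase by one and the optimal fade sets
   correspond, so f^- and f^+ are unchanged. *)

Lemma properP (T : finType) (e : rel T) k (c : {ffun T -> 'I_k}) :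
  reflect (forall x y, e x y -> c x != c y) (proper e c).
Proof.
apply: (iffP forallP) => [H x y | H x]; first exact/implyP/(forallP (H x)).
by apply/forallP => y; apply/implyP/H.
Qed.

(* Defs fixes the number of colours to chi; since the join shifts chi, the
   rainbow notions are needed for an arbitrary number k of colours. *)
Section KColourings.
Variables (T : finType) (e : rel T) (k : nat).

Definition krainbow (c : {ffun T -> 'I_k}) (F : {set T}) (v : T) : bool :=
  [forall i : 'I_k, exists u, [&& u \in closed_nbhd e v, u \notin F & c u == i]].

Definition krcount (c : {ffun T -> 'I_k}) (F : {set T}) : nat :=
  #|[set v | krainbow c F v]|.

Definition kr_minus : nat :=
  \big[minn/#|T|]_(c : {ffun T -> 'I_k} | proper e c) krcount c set0.

Definition kr_plus : nat :=
  \max_(c : {ffun T -> 'I_k} | proper e c) krcount c set0.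

Definition kfading (r : nat) : nat :=
  \max_(c : {ffun T -> 'I_k} | proper e c && (krcount c set0 == r))
     \max_(F : {set T} | krcount c F == r) #|F|.

End KColourings.

Lemma f_minusE (T : finType) (e : rel T) :
  f_minus e = kfading e (chi e) (kr_minus e (chi e)).
Proof. by []. Qed.

Lemma f_plusE (T : finType) (e : rel T) :
  f_plus e = kfading e (chi e) (kr_plus e (chi e)).
Proof. by []. Qed.

Section BigMinn.
Variables (I : finType) (P : pred I) (F : I -> nat) (N : nat).

Lemma geq_bigminn : \big[minn/N]_(i | P i) F i <= N.
Proof.
elim: (index_enum I) => [|a s IHs]; rewrite ?big_nil ?big_cons //.
by case: (P a); rewrite ?geq_min IHs ?orbT.
Qed.

Lemma geq_bigminn_cond i : P i -> \big[minn/N]_(j | P j) F j <= F i.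
Proof.
move=> Pi; have : i \in index_enum I by rewrite mem_index_enum.
elim: (index_enum I) => [|a s IHs] //; rewrite inE big_cons.
case/orP=> [/eqP <- | ist]; first by rewrite Pi geq_minl.
by case: (P a); rewrite ?geq_min IHs ?orbT.
Qed.

Lemma leq_bigminn m :
  m <= N -> (forall i, P i -> m <= F i) -> m <= \big[minn/N]_(i | P i) F i.
Proof. by move=> mN mF; apply: (big_ind (leq m)) => // x y; rewrite leq_min => ->. Qed.

End BigMinn.

Section Correspondence.
Variables (I J : finType) (P : pred I) (Q : pred J) (F : I -> nat) (G : J -> nat).

Lemma eq_bigmax_corr :
  (forall i, P i -> exists2 j, Q j & G j = F i) ->
  (forall j, Q j -> exists2 i, P i & G j = F i) ->
  \max_(i | P i) F i = \max_(j | Q j) G j.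
Proof.
move=> PQ QP; apply/eqP; rewrite eqn_leq; apply/andP; split.
- by apply/bigmax_leqP => i /PQ [j Qj <-]; apply: leq_bigmax_cond.
- by apply/bigmax_leqP => j /QP [i Pi ->]; apply: leq_bigmax_cond.
Qed.

Hypothesis PQ : forall i, P i -> exists2 j, Q j & G j = (F i).+1.
Hypothesis QP : forall j, Q j -> exists2 i, P i & G j = (F i).+1.

Lemma bigminn_succ N :
  \big[minn/N.+1]_(j | Q j) G j = (\big[minn/N]_(i | P i) F i).+1.
Proof.
apply/eqP; rewrite eqn_leq; apply/andP; split.
- suff : (\big[minn/N.+1]_(j | Q j) G j).-1 <= \big[minn/N]_(i | P i) F i.
    by have := geq_bigminn Q G N.+1; lia.
  apply: leq_bigminn; first by have := geq_bigminn Q G N.+1; lia.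
  move=> i /PQ [j Qj Gj]; have := geq_bigminn_cond G N.+1 Qj; lia.
- apply: leq_bigminn; first by rewrite ltnS geq_bigminn.
  by move=> j /QP [i Pi ->]; rewrite ltnS geq_bigminn_cond.
Qed.

Lemma bigmax_succ i0 : P i0 -> \max_(j | Q j) G j = (\max_(i | P i) F i).+1.
Proof.
move=> Pi0; apply/eqP; rewrite eqn_leq; apply/andP; split.
- by apply/bigmax_leqP => j /QP [i Pi ->]; rewrite ltnS leq_bigmax_cond.
- have [j0 Qj0 Gj0] := PQ Pi0.
  have Gpos : 0 < \max_(j | Q j) G j.
    by apply: leq_trans (leq_bigmax_cond _ Qj0); rewrite Gj0.
  rewrite -(prednK Gpos) ltnS; apply/bigmax_leqP => i /PQ [j Qj Gj].
  by rewrite -ltnS prednK // -Gj leq_bigmax_cond.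
Qed.

End Correspondence.

Lemma factor_lift (T : finType) n (f : T -> 'I_n) (h : 'I_n) :
  0 < #|T| -> (forall x, f x != h) ->
  exists c : {ffun T -> 'I_n.-1}, forall x, f x = lift h (c x).
Proof.
case/card_gt0P=> x0 _ fh; have hf x : h != f x by rewrite eq_sym fh.
have [d _ _] := unlift_some (hf x0).
exists [ffun x => odflt d (unlift h (f x))] => x; rewrite ffunE.
by have [j -> ->] := unlift_some (hf x).
Qed.

Section ChromaticNumber.
Variables (T : finType) (e : rel T).

Lemma chi_le k (c : {ffun T -> 'I_k}) : proper e c -> chi e <= k.
Proof.
move=> pc; rewrite /chi; have [kT | Tk] := leqP k #|T|.
  have kT' : k < #|T|.+1 by [].
  apply: (geq_bigminn_cond (fun i : 'I_#|T|.+1 => i : nat) #|T| (i := Ordinal kT')).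
  by apply/existsP; exists c.
exact: leq_trans (geq_bigminn _ _ _) (ltnW Tk).
Qed.

Lemma proper_chi : irreflexive e -> exists c : {ffun T -> 'I_(chi e)}, proper e c.
Proof.
move=> irr; elim/big_ind: (chi e) => [||i /existsP //].
- exists [ffun x => enum_rank x]; apply/properP => x y exy; rewrite !ffunE.
  by apply: contraTneq exy => /enum_rank_inj ->; rewrite irr.
- by move=> x y cx cy; case: leqP.
Qed.

Lemma chi_pred_not_proper :
  0 < #|T| -> forall c : {ffun T -> 'I_(chi e).-1}, ~~ proper e c.
Proof. by case/card_gt0P=> x _ c; apply/negP => /chi_le; have := ltn_ord (c x); lia. Qed.

End ChromaticNumber.

Section ApexColourings.
Variables (T : finType) (e : rel T) (n : nat).

Definition apex_ext (c' : {ffun option T -> 'I_n}) (c : {ffun T -> 'I_n.-1}) :=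
  forall x, c' (Some x) = lift (c' None) (c x).

Variables (c' : {ffun option T -> 'I_n}) (c : {ffun T -> 'I_n.-1}).
Hypothesis c'E : apex_ext c' c.
Implicit Types (G : {set option T}) (v : T).

Lemma proper_join : proper (join_K1 e) c' = proper e c.
Proof.
apply/properP/properP => [H x y exy | H [x|] [y|] //= exy]; rewrite ?c'E.
- apply: contraNneq (H (Some x) (Some y) exy) => /(congr1 (lift (c' None))).
  by rewrite -!c'E => ->.
- by apply: contraNneq (H _ _ exy) => /lift_inj ->.
- by rewrite eq_sym neq_lift.
- by rewrite neq_lift.
Qed.

Lemma krainbow_join_faded_apex G (v : option T) :
  None \in G -> krainbow (join_K1 e) c' G v = false.
Proof.
move=> NG; apply/negP => /forallP /(_ (c' None)) /existsP [[u|]].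
- by rewrite c'E eq_sym (negbTE (neq_lift _ _)) !andbF.
- by rewrite NG andbF.
Qed.

Lemma krainbow_join_Some G v : None \notin G ->
  krainbow (join_K1 e) c' G (Some v) = krainbow e c (Some @^-1: G) v.
Proof.
move=> NF; apply/forallP/forallP => H i.
- have /existsP [[u|]] := H (lift (c' None) i); rewrite !inE /=.
  + rewrite c'E => /and3P [uv uF /eqP/lift_inj ci].
    by apply/existsP; exists u; rewrite !inE uv uF ci eqxx.
  + by rewrite (negbTE (neq_lift _ _)) !andbF.
- have [j ->| ->] := unliftP (c' None) i.
  + have /existsP [u] := H j; rewrite !inE => /and3P [uv uF /eqP cj].
    by apply/existsP; exists (Some u); rewrite !inE /= uv uF c'E cj eqxx.
  + by apply/existsP; exists None; rewrite !inE NF eqxx.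
Qed.

Lemma krainbow_join_apex G v : None \notin G ->
  krainbow e c (Some @^-1: G) v -> krainbow (join_K1 e) c' G None.
Proof.
move=> NF /forallP H; apply/forallP => i.
have [j ->| ->] := unliftP (c' None) i.
- have /existsP [u] := H j; rewrite !inE => /and3P [_ uF /eqP cj].
  by apply/existsP; exists (Some u); rewrite !inE uF c'E cj eqxx.
- by apply/existsP; exists None; rewrite !inE NF !eqxx.
Qed.

Lemma krcount_join G : None \notin G ->
  krcount (join_K1 e) c' G =
  krcount e c (Some @^-1: G) + krainbow (join_K1 e) c' G None.
Proof.
move=> NF; set S := [set v | krainbow e c (Some @^-1: G) v].
have SE : [set v | krainbow (join_K1 e) c' G v] =
    (if krainbow (join_K1 e) c' G None then None |: Some @: S else Some @: S).
  apply/setP => -[x|]; rewrite inE; case: ifP => rb.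
  - by rewrite krainbow_join_Some // in_setU1 /= mem_imset ?inE //; apply: Some_inj.
  - by rewrite krainbow_join_Some // mem_imset ?inE //; apply: Some_inj.
  - by rewrite in_setU1 eqxx.
  - by apply/esym/negbTE/imsetP => -[].
rewrite /krcount SE; have NS : None \notin Some @: S by apply/imsetP => -[].
by case: ifP; rewrite ?cardsU1 ?NS card_imset ?addn0 ?addn1 //; apply: Some_inj.
Qed.

Lemma krcount_join_faded_apex G : None \in G -> krcount (join_K1 e) c' G = 0.
Proof.
by move=> NG; apply/eqP; rewrite cards_eq0; apply/eqP/setP => v;
  rewrite !inE krainbow_join_faded_apex.
Qed.

Lemma krcount_join_pos G : None \notin G -> 0 < krcount e c (Some @^-1: G) ->
  krcount (join_K1 e) c' G = (krcount e c (Some @^-1: G)).+1.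
Proof.
move=> NF /card_gt0P [v]; rewrite inE => rv.
by rewrite krcount_join // (krainbow_join_apex NF rv) addn1.
Qed.

Lemma krcount_join_set0 : 0 < krcount e c set0 ->
  krcount (join_K1 e) c' set0 = (krcount e c set0).+1.
Proof. by have := @krcount_join_pos set0; rewrite preimset0 inE; apply. Qed.

Lemma krcount_join_succ G r : krcount (join_K1 e) c' G = r.+1 ->
  None \notin G /\ krcount e c (Some @^-1: G) = r.
Proof.
move=> cG; have [NF|NF] := boolP (None \in G).
  by rewrite krcount_join_faded_apex in cG.
split=> //; move: cG; have [c0|pos] := posnP (krcount e c (Some @^-1: G)).
- by rewrite krcount_join // c0; case: (krainbow _ _ _ _) => /=; lia.
- by rewrite krcount_join_pos // => -[].
Qed.

End ApexColourings.

Lemma apex_ext_exists (T : finType) k (c : {ffun T -> 'I_k}) :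
  exists c' : {ffun option T -> 'I_k.+1}, apex_ext c' c.
Proof.
exists [ffun o => if o is Some x then lift ord_max (c x) else ord_max].
by move=> x; rewrite !ffunE.
Qed.

Lemma apex_restr_exists (T : finType) (e : rel T) n (c' : {ffun option T -> 'I_n}) :
  0 < #|T| -> proper (join_K1 e) c' -> exists c, apex_ext c' c.
Proof.
move=> T0 /properP pc'; apply: (factor_lift T0) => x.
exact: pc' (Some x) None _.
Qed.

Lemma chi_join (T : finType) (e : rel T) :
  irreflexive e -> 0 < #|T| -> chi (join_K1 e) = (chi e).+1.
Proof.
move=> irr T0; apply/eqP; rewrite eqn_leq; apply/andP; split.
- have [c pc] := proper_chi irr; have [c' c'E] := apex_ext_exists c.
  by apply: (chi_le (c := c')); rewrite (proper_join _ c'E).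
- have irr' : irreflexive (join_K1 e) by case.
  have [c' pc'] := proper_chi irr'; have [c c'E] := apex_restr_exists T0 pc'.
  rewrite (proper_join _ c'E) in pc'.
  by have := chi_le pc'; have := ltn_ord (c' None); lia.
Qed.

Section RainbowVertex.
Variables (T : finType) (e : rel T) (k : nat) (c : {ffun T -> 'I_k.+1}).
Hypotheses (e_sym : symmetric e) (c_proper : proper e c).
Hypothesis no_rainbow : forall v, ~~ krainbow e c set0 v.

(* The default [ord_max] is never used: [no_rainbow] provides a missing colour. *)
Definition missing_colour v : 'I_k.+1 :=
  odflt ord_max [pick j | [forall u in closed_nbhd e v, c u != j]].

Lemma missing_colourP v u : u \in closed_nbhd e v -> c u != missing_colour v.
Proof.
rewrite /missing_colour; case: pickP => [j /forall_inP H | none]; first exact: H.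
case/negP: (no_rainbow v); apply/forallP => i.
have /negbT /forall_inPn [w wv /negPn ci] := none i.
by apply/existsP; exists w; rewrite wv inE ci.
Qed.

Definition recolour v : 'I_k.+1 := if c v == ord_max then missing_colour v else c v.

Lemma recolour_neq_max v : recolour v != ord_max.
Proof.
rewrite /recolour; case: ifP => [/eqP <- | /negbT //]; rewrite eq_sym missing_colourP //.
by rewrite inE eqxx.
Qed.

Lemma recolour_proper x y : e x y -> recolour x != recolour y.
Proof.
move=> exy; have yx : y \in closed_nbhd e x by rewrite inE exy orbT.
have xy : x \in closed_nbhd e y by rewrite inE e_sym exy orbT.
have cxy := properP _ _ c_proper x y exy.
rewrite /recolour.
case: (eqVneq (c x) ord_max) => [cx|_]; case: (eqVneq (c y) ord_max) => [cy|_] //.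
- by rewrite cx cy eqxx in cxy.
- by rewrite eq_sym missing_colourP.
- exact: missing_colourP.
Qed.

End RainbowVertex.

Lemma rainbow_vertex (T : finType) (e : rel T) k (c : {ffun T -> 'I_k}) :
  symmetric e -> proper e c -> 0 < #|T| ->
  (forall c0 : {ffun T -> 'I_k.-1}, ~~ proper e c0) ->
  exists v, krainbow e c set0 v.
Proof.
move=> e_sym pc T0 not_proper; apply/existsP; apply: contraT => /existsPn no_rb.
case: k c pc not_proper no_rb => [|k] c pc not_proper no_rb.
  by case/card_gt0P: T0 => x _; case: (c x).
have [c0 c0E] := factor_lift T0 (recolour_neq_max no_rb).
case/negP: (not_proper c0); apply/properP => x y exy.
by apply: contra (recolour_proper e_sym pc no_rb exy); rewrite !c0E => /eqP ->.
Qed.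

Lemma preimset_Some_imset (T : finType) (A : {set T}) : Some @^-1: (Some @: A) = A.
Proof. by apply/setP => x; rewrite inE mem_imset //; apply: Some_inj. Qed.

Lemma imset_Some_preimset (T : finType) (B : {set option T}) :
  None \notin B -> Some @: (Some @^-1: B) = B.
Proof.
move=> NB; apply/setP => -[x|]; last by rewrite (negbTE NB); apply/negbTE/imsetP => -[].
by rewrite mem_imset ?inE //; apply: Some_inj.
Qed.

Section JoinNumbers.
Variables (T : finType) (e : rel T) (k : nat).
Hypothesis T0 : 0 < #|T|.

Lemma fade_max_join n (c' : {ffun option T -> 'I_n}) c r : apex_ext c' c -> 0 < r ->
  \max_(F' | krcount (join_K1 e) c' F' == r.+1) #|F'| =
  \max_(F | krcount e c F == r) #|F|.
Proof.
move=> c'E r0; apply: eq_bigmax_corr => [F' /eqP | F /eqP cF].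
- case/(krcount_join_succ c'E) => NF cF; exists (Some @^-1: F'); first exact/eqP.
  by rewrite -{2}(imset_Some_preimset NF) card_imset //; apply: Some_inj.
- have NF : None \notin Some @: F by apply/imsetP => -[].
  exists (Some @: F); last by rewrite card_imset //; apply: Some_inj.
  by rewrite (krcount_join_pos c'E NF) preimset_Some_imset cF.
Qed.

Lemma fading_join r : 0 < r -> kfading (join_K1 e) k.+1 r.+1 = kfading e k r.
Proof.
move=> r0; symmetry.
apply: eq_bigmax_corr => [c /andP [pc /eqP c0] | c' /andP [pc' /eqP c'0]].
- have [c' c'E] := apex_ext_exists c; exists c'; last exact: fade_max_join.
  by rewrite (proper_join _ c'E) pc (krcount_join_set0 c'E) c0 ?eqxx.
- have [c c'E] := apex_restr_exists T0 pc'; exists c; last exact: fade_max_join.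
  have [_] := krcount_join_succ c'E c'0; rewrite preimset0 => ->.
  by rewrite -(proper_join _ c'E) pc' eqxx.
Qed.

Hypothesis rainbow_pos :
  forall c : {ffun T -> 'I_k}, proper e c -> 0 < krcount e c set0.

Lemma proper_join_succ (c : {ffun T -> 'I_k}) : proper e c ->
  exists2 c' : {ffun option T -> 'I_k.+1}, proper (join_K1 e) c' &
    krcount (join_K1 e) c' set0 = (krcount e c set0).+1.
Proof.
move=> pc; have [c' c'E] := apex_ext_exists c; exists c'.
  by rewrite (proper_join _ c'E).
by rewrite (krcount_join_set0 c'E) ?rainbow_pos.
Qed.

Lemma proper_join_pred (c' : {ffun option T -> 'I_k.+1}) : proper (join_K1 e) c' ->
  exists2 c : {ffun T -> 'I_k}, proper e c &
    krcount (join_K1 e) c' set0 = (krcount e c set0).+1.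
Proof.
move=> pc'; have [c c'E] := apex_restr_exists T0 pc'.
have pc : proper e c by rewrite -(proper_join _ c'E).
by exists c; rewrite // (krcount_join_set0 c'E) ?rainbow_pos.
Qed.

Lemma kr_minus_join : kr_minus (join_K1 e) k.+1 = (kr_minus e k).+1.
Proof.
rewrite /kr_minus card_option.
exact: bigminn_succ proper_join_succ proper_join_pred _.
Qed.

Lemma kr_plus_join (c0 : {ffun T -> 'I_k}) :
  proper e c0 -> kr_plus (join_K1 e) k.+1 = (kr_plus e k).+1.
Proof. exact: bigmax_succ proper_join_succ proper_join_pred c0. Qed.

End JoinNumbers.

Theorem lemma2p3 (T : finType) (e : rel T) :
  simple_graph e -> connected_graph e -> 0 < #|T| ->
  f_minus (join_K1 e) = f_minus e /\ f_plus (join_K1 e) = f_plus e.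
Proof.
move=> [e_sym e_irr] _ T0.
have rainbow_pos (c : {ffun T -> 'I_(chi e)}) : proper e c -> 0 < krcount e c set0.
  move=> pc; have [v rv] := rainbow_vertex e_sym pc T0 (chi_pred_not_proper T0).
  by apply/card_gt0P; exists v; rewrite inE.
have [c0 pc0] := proper_chi e_irr.
have r_minus_pos : 0 < kr_minus e (chi e) by apply: leq_bigminn.
have r_plus_pos : 0 < kr_plus e (chi e).
  exact: leq_trans (rainbow_pos _ pc0) (leq_bigmax_cond _ pc0).
rewrite !f_minusE !f_plusE (chi_join e_irr T0).
rewrite (kr_minus_join T0 rainbow_pos) (kr_plus_join T0 rainbow_pos pc0).
by rewrite !fading_join.
Qed.
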